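(* Consider a parallel-link network with $n=2$ links, unit demand and latencies $\ell_1,\ell_2\in\mathcal{L}_c$. Let $t\in\mathcal{T}(\infty)$ and suppose $x_1(t)>0$ and $x_2(t)>0$. Then $x_1(0)\ge x_1(t)$ if and only if $x_1(t)\ge \frac12$.
   Context: $\mathcal{L}_c$: strictly increasing, convex, continuously differentiable functions $\mathbb{R}_+\to\mathbb{R}_+$. Flows $x\in\mathbb{R}^2_+$ with $x_1+x_2=1$. For tolls $t\in\mathbb{R}^2_+$, $x(t)$ is the unique Wardrop equilibrium for $t$ (for all $i,j$ with $x_i>0$: $\ell_i(x_i)+t_i\le\ell_j(x_j)+t_j$); $x(0)$ is the untolled Wardrop equilibrium. Profit $\Pi_i(t)=t_ix_i(t)$. $\mathcal{T}(\infty)$: toll vectors $t\in\mathbb{R}^2_+$ such that for every $i$ and every $t'_i\ge 0$, $\Pi_i(t_i,t_{-i})\ge\Pi_i(t'_i,t_{-i})$ (flow recomputed). *)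

From Stdlib Require Import Reals Lra.
Open Scope R_scope.

(* Latency class L_c: functions R_+ -> R_+ (represented as R -> R, only values
   on [0,oo) matter) that are strictly increasing, convex and continuously
   differentiable on R_+ (one-sided derivative at 0). *)

Definition nonneg_on_Rplus (f : R -> R) : Prop :=
  forall x, 0 <= x -> 0 <= f x.

Definition strictly_increasing_on_Rplus (f : R -> R) : Prop :=
  forall x y, 0 <= x -> x < y -> f x < f y.

Definition convex_on_Rplus (f : R -> R) : Prop :=
  forall x y lam, 0 <= x -> 0 <= y -> 0 <= lam <= 1 ->
    f (lam * x + (1 - lam) * y) <= lam * f x + (1 - lam) * f y.

Definition C1_on_Rplus (f : R -> R) : Prop :=
  exists d : R -> R,
    (forall x, 0 <= x ->
       limit1_in (fun y => (f y - f x) / (y - x))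
                 (fun y => 0 <= y /\ y <> x) (d x) x) /\
    (forall x, 0 <= x -> limit1_in d (fun y => 0 <= y) (d x) x).

Definition in_Lc (f : R -> R) : Prop :=
  nonneg_on_Rplus f /\ strictly_increasing_on_Rplus f /\
  convex_on_Rplus f /\ C1_on_Rplus f.

Definition feasible (x1 x2 : R) : Prop :=
  0 <= x1 /\ 0 <= x2 /\ x1 + x2 = 1.

(* (x1,x2) is a Wardrop equilibrium for tolls (t1,t2): for all i,j with x_i>0,
   l_i(x_i)+t_i <= l_j(x_j)+t_j  (the cases i = j are trivial). *)
Definition wardrop (l1 l2 : R -> R) (t1 t2 x1 x2 : R) : Prop :=
  feasible x1 x2 /\
  (0 < x1 -> l1 x1 + t1 <= l2 x2 + t2) /\
  (0 < x2 -> l2 x2 + t2 <= l1 x1 + t1).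

(* T(oo): toll vectors in R_+^2 from which no link owner can profitably
   deviate to any nonnegative toll, the flow being recomputed as the
   (unique) Wardrop equilibrium. *)
Definition in_T_inf (l1 l2 : R -> R) (t1 t2 : R) : Prop :=
  0 <= t1 /\ 0 <= t2 /\
  (forall t1', 0 <= t1' -> forall x1 x2 y1 y2,
      wardrop l1 l2 t1 t2 x1 x2 -> wardrop l1 l2 t1' t2 y1 y2 ->
      t1' * y1 <= t1 * x1) /\
  (forall t2', 0 <= t2' -> forall x1 x2 y1 y2,
      wardrop l1 l2 t1 t2 x1 x2 -> wardrop l1 l2 t1 t2' y1 y2 ->
      t2' * y2 <= t2 * x2).

From Stdlib Require Import Reals Lra.
Open Scope R_scope.

(* At an interior equilibrium each link owner is at a local optimum of its
   profit.  If link 1 cuts its toll by a small amount [G] (or link 2 raises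
   its toll by [G]), the flow moves from [x1] to [x1 + d], where
   [G = (l1 (x1 + d) - l1 x1) + (l2 x2 - l2 (x2 - d))]; the two no-deviation
   inequalities give [t1 d <= G (x1 + d)] and [G (x2 - d) <= t2 d], hence
   [t1 x2 - t2 x1 <= d (t1 + t2)].  Letting [d -> 0], and using the symmetry
   between the links, the tolls are proportional to the flows:
   [t1 x2 = t2 x1], with [t1 > 0].  So the link with more flow charges the
   higher toll, hence has the lower latency, and removing the tolls moves
   flow towards it. *)

Definition continuous_on_Rplus (f : R -> R) : Prop :=
  forall x eps, 0 <= x -> 0 < eps ->
    exists a, 0 < a /\
      forall y, 0 <= y -> Rabs (y - x) < a -> Rabs (f y - f x) < eps.

Lemma C1_on_Rplus_continuous {f : R -> R} :
  C1_on_Rplus f -> continuous_on_Rplus f.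
Proof.
  intros [d [Hd _]] x eps Hx Heps.
  destruct (Hd x Hx 1 Rlt_0_1) as [alp [Halp Hq]].
  set (K := Rabs (d x) + 1).
  assert (HK : 0 < K) by (pose proof (Rabs_pos (d x)); unfold K; lra).
  exists (Rmin alp (eps / K)); split.
  { apply Rmin_pos; [lra | apply Rdiv_lt_0_compat; lra]. }
  intros y Hy Hyx.
  destruct (Req_dec y x) as [-> | Hne].
  { replace (f x - f x) with 0 by ring; rewrite Rabs_R0; lra. }
  pose proof (Rmin_l alp (eps / K)) as Hmin_alp.
  pose proof (Rmin_r alp (eps / K)) as Hmin_eps.
  assert (Hquot : Rabs ((f y - f x) / (y - x) - d x) < 1).
  { apply (Hq y); split; [split; assumption|]; simpl; unfold R_dist; lra. }
  set (q := (f y - f x) / (y - x)) in Hquot.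
  assert (Hq_bound : Rabs q < K).
  { pose proof (Rabs_triang (q - d x) (d x)) as Htri.
    replace (q - d x + d x) with q in Htri by ring; unfold K; lra. }
  replace (f y - f x) with (q * (y - x)) by (unfold q; field; lra).
  rewrite Rabs_mult.
  apply Rle_lt_trans with (K * Rabs (y - x)).
  { apply Rmult_le_compat_r; [apply Rabs_pos | lra]. }
  apply Rlt_le_trans with (K * (eps / K)).
  { apply Rmult_lt_compat_l; lra. }
  right; field; lra.
Qed.

Lemma le_0_of_forall_small (a c d0 : R) :
  0 < d0 -> (forall d, 0 < d < d0 -> a <= d * c) -> a <= 0.
Proof.
  intros Hd0 Hsmall.
  destruct (Rle_or_lt a 0) as [Ha | Ha]; [exact Ha | exfalso].
  set (C := Rabs c + 1).
  assert (HC : 0 < C) by (pose proof (Rabs_pos c); unfold C; lra).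
  set (d := Rmin (d0 / 2) (a / (2 * C))).
  assert (Hd : 0 < d) by (apply Rmin_pos; [lra | apply Rdiv_lt_0_compat; lra]).
  pose proof (Rmin_l (d0 / 2) (a / (2 * C))) as Hd_d0.
  pose proof (Rmin_r (d0 / 2) (a / (2 * C))) as Hd_a.
  fold d in Hd_d0, Hd_a.
  assert (Hdc : d * c <= d * C).
  { apply Rmult_le_compat_l; [lra|].
    pose proof (Rle_abs c); unfold C; lra. }
  assert (HdC : d * C <= a / 2).
  { apply Rle_trans with (a / (2 * C) * C).
    - apply Rmult_le_compat_r; lra.
    - right; field; lra. }
  assert (Hd_lt : 0 < d < d0) by lra.
  pose proof (Hsmall d Hd_lt); lra.
Qed.

Lemma wardrop_swap {l1 l2 : R -> R} {t1 t2 x1 x2 : R} :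
  wardrop l1 l2 t1 t2 x1 x2 -> wardrop l2 l1 t2 t1 x2 x1.
Proof. intros [[H1 [H2 Hs]] [W1 W2]]; split; [split; [|split]|split]; auto; lra. Qed.

Lemma in_T_inf_swap {l1 l2 : R -> R} {t1 t2 : R} :
  in_T_inf l1 l2 t1 t2 -> in_T_inf l2 l1 t2 t1.
Proof.
  intros [Ht1 [Ht2 [Dev1 Dev2]]]; split; [|split; [|split]]; auto.
  - intros t2' Ht2' x2 x1 y2 y1 Wx Wy.
    exact (Dev2 t2' Ht2' x1 x2 y1 y2 (wardrop_swap Wx) (wardrop_swap Wy)).
  - intros t1' Ht1' x2 x1 y2 y1 Wx Wy.
    exact (Dev1 t1' Ht1' x1 x2 y1 y2 (wardrop_swap Wx) (wardrop_swap Wy)).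
Qed.

Lemma wardrop_interior (l1 l2 : R -> R) (t1 t2 y : R) :
  0 < y < 1 -> l1 y + t1 = l2 (1 - y) + t2 -> wardrop l1 l2 t1 t2 y (1 - y).
Proof. intros Hy Heq; split; [split; [|split]|split]; intros; lra. Qed.

Lemma wardrop_interior_costs_eq {l1 l2 : R -> R} {t1 t2 x1 x2 : R} :
  wardrop l1 l2 t1 t2 x1 x2 -> 0 < x1 -> 0 < x2 ->
  l1 x1 + t1 = l2 x2 + t2.
Proof. intros [_ [W1 W2]] Hx1 Hx2; specialize (W1 Hx1); specialize (W2 Hx2); lra. Qed.

Section InteriorEquilibrium.

Context {l1 l2 : R -> R} {t1 t2 x1 x2 : R}.
Hypotheses (Hl1 : strictly_increasing_on_Rplus l1)
           (Hl2 : strictly_increasing_on_Rplus l2)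
           (Ht : in_T_inf l1 l2 t1 t2)
           (Wx : wardrop l1 l2 t1 t2 x1 x2)
           (Hx1 : 0 < x1) (Hx2 : 0 < x2).

Lemma T_inf_interior_toll_pos : 0 < t1.
Proof.
  destruct Ht as [Ht1 [_ [Dev1 _]]].
  destruct Wx as [[_ [_ Hsum]] _].
  pose proof (wardrop_interior_costs_eq Wx Hx1 Hx2) as Hcost.
  set (y := x1 / 2).
  (* raising the toll by [G] halves the flow; as this does not pay, [G <= t1] *)
  set (G := (l1 x1 - l1 y) + (l2 (1 - y) - l2 x2)).
  assert (HG : 0 < G).
  { pose proof (Hl1 y x1 ltac:(unfold y; lra) ltac:(unfold y; lra)).
    pose proof (Hl2 x2 (1 - y) ltac:(lra) ltac:(unfold y; lra)).
    unfold G; lra. }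
  assert (Wy : wardrop l1 l2 (t1 + G) t2 y (1 - y)).
  { apply wardrop_interior; unfold G, y in *; lra. }
  pose proof (Dev1 (t1 + G) ltac:(lra) _ _ _ _ Wx Wy) as Hprofit.
  unfold y in Hprofit; nra.
Qed.

Hypotheses (Cl1 : continuous_on_Rplus l1) (Cl2 : continuous_on_Rplus l2).

Lemma T_inf_interior_toll_le : t1 * x2 <= t2 * x1.
Proof.
  destruct Ht as [Ht1 [Ht2 [Dev1 Dev2]]].
  destruct Wx as [[_ [_ Hsum]] _].
  pose proof (wardrop_interior_costs_eq Wx Hx1 Hx2) as Hcost.
  pose proof T_inf_interior_toll_pos as Ht1_pos.
  destruct (Cl1 x1 (t1 / 2) ltac:(lra) ltac:(lra)) as [a1 [Ha1 Hc1]].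
  destruct (Cl2 x2 (t1 / 2) ltac:(lra) ltac:(lra)) as [a2 [Ha2 Hc2]].
  assert (Hd0 : 0 < Rmin x2 (Rmin a1 a2)) by (repeat apply Rmin_pos; lra).
  cut (t1 * x2 - t2 * x1 <= 0); [lra|].
  apply (le_0_of_forall_small (t1 * x2 - t2 * x1) (t1 + t2) _ Hd0).
  intros d [Hd Hd_small].
  pose proof (Rmin_l x2 (Rmin a1 a2)); pose proof (Rmin_r x2 (Rmin a1 a2)).
  pose proof (Rmin_l a1 a2); pose proof (Rmin_r a1 a2).
  set (y := x1 + d).
  set (G := (l1 y - l1 x1) + (l2 x2 - l2 (1 - y))).
  assert (HG_pos : 0 < G).
  { pose proof (Hl1 x1 y ltac:(lra) ltac:(unfold y; lra)).
    pose proof (Hl2 (1 - y) x2 ltac:(unfold y; lra) ltac:(unfold y; lra)).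
    unfold G; lra. }
  assert (HG_small : G < t1).
  { pose proof (Hc1 y ltac:(unfold y; lra)
                  ltac:(unfold y; rewrite Rabs_pos_eq; lra)) as Hnear1.
    pose proof (Hc2 (1 - y) ltac:(unfold y; lra)
                  ltac:(unfold y; rewrite Rabs_left; lra)) as Hnear2.
    pose proof (Rle_abs (l1 y - l1 x1)).
    pose proof (Rabs_Ropp (l2 (1 - y) - l2 x2)).
    pose proof (Rle_abs (- (l2 (1 - y) - l2 x2))).
    unfold G; lra. }
  assert (W1 : wardrop l1 l2 (t1 - G) t2 y (1 - y)).
  { apply wardrop_interior; unfold G, y in *; lra. }
  assert (W2 : wardrop l1 l2 t1 (t2 + G) y (1 - y)).
  { apply wardrop_interior; unfold G, y in *; lra. }
  pose proof (Dev1 (t1 - G) ltac:(lra) _ _ _ _ Wx W1) as Hprofit1.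
  pose proof (Dev2 (t2 + G) ltac:(lra) _ _ _ _ Wx W2) as Hprofit2.
  assert (Hcut : t1 * d <= G * (x1 + d)) by (unfold y in Hprofit1; nra).
  assert (Hraise : G * (x2 - d) <= t2 * d) by (unfold y in Hprofit2; nra).
  assert (Hprod : t1 * d * (x2 - d) <= t2 * d * (x1 + d)) by nra.
  assert (t1 * (x2 - d) <= t2 * (x1 + d)) by nra.
  nra.
Qed.

End InteriorEquilibrium.

Lemma T_inf_interior_tolls_proportional {l1 l2 : R -> R} {t1 t2 x1 x2 : R} :
  strictly_increasing_on_Rplus l1 -> strictly_increasing_on_Rplus l2 ->
  continuous_on_Rplus l1 -> continuous_on_Rplus l2 ->
  in_T_inf l1 l2 t1 t2 -> wardrop l1 l2 t1 t2 x1 x2 -> 0 < x1 -> 0 < x2 ->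
  t1 * x2 = t2 * x1.
Proof.
  intros Hl1 Hl2 Cl1 Cl2 Ht Wx Hx1 Hx2.
  pose proof (T_inf_interior_toll_le Hl1 Hl2 Ht Wx Hx1 Hx2 Cl1 Cl2).
  pose proof (T_inf_interior_toll_le Hl2 Hl1 (in_T_inf_swap Ht)
                (wardrop_swap Wx) Hx2 Hx1 Cl2 Cl1).
  lra.
Qed.

Lemma untolled_flow_ge_iff {l1 l2 : R -> R} {t1 t2 x1 x2 z1 z2 : R} :
  strictly_increasing_on_Rplus l1 -> strictly_increasing_on_Rplus l2 ->
  wardrop l1 l2 t1 t2 x1 x2 -> wardrop l1 l2 0 0 z1 z2 ->
  0 < x1 -> 0 < x2 ->
  (x1 <= z1 <-> t2 <= t1).
Proof.
  intros Hl1 Hl2 Wx Wz Hx1 Hx2.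
  pose proof (wardrop_interior_costs_eq Wx Hx1 Hx2) as Hcost.
  destruct Wx as [[_ [_ Hxs]] _].
  destruct Wz as [[Hz1 [Hz2 Hzs]] [V1 V2]].
  split; intros Hle.
  - destruct (Rlt_or_le t1 t2) as [Hlt | Hge]; [exfalso | exact Hge].
    assert (l1 x1 <= l1 z1).
    { destruct (Req_dec x1 z1) as [<- | Hne]; [lra|].
      left; apply Hl1; lra. }
    assert (l2 z2 <= l2 x2).
    { destruct (Req_dec z2 x2) as [-> | Hne]; [lra|].
      left; apply Hl2; lra. }
    specialize (V1 ltac:(lra)); lra.
  - destruct (Rlt_or_le z1 x1) as [Hlt | Hge]; [exfalso | exact Hge].
    pose proof (Hl1 z1 x1 Hz1 Hlt).
    pose proof (Hl2 x2 z2 ltac:(lra) ltac:(lra)).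
    specialize (V2 ltac:(lra)); lra.
Qed.

Theorem mainTheorem9 (l1 l2 : R -> R) (t1 t2 : R)
  (x1 x2 : R) (z1 z2 : R) :
  in_Lc l1 -> in_Lc l2 ->
  in_T_inf l1 l2 t1 t2 ->
  wardrop l1 l2 t1 t2 x1 x2 ->   (* x(t) = (x1, x2) *)
  wardrop l1 l2 0 0 z1 z2 ->     (* x(0) = (z1, z2) *)
  0 < x1 -> 0 < x2 ->
  (x1 <= z1 <-> 1 / 2 <= x1).
Proof.
  intros [_ [Hl1 [_ C1]]] [_ [Hl2 [_ C2]]] Ht Wx Wz Hx1 Hx2.
  pose proof (C1_on_Rplus_continuous C1) as Cl1.
  pose proof (C1_on_Rplus_continuous C2) as Cl2.
  pose proof (T_inf_interior_tolls_proportional Hl1 Hl2 Cl1 Cl2 Ht Wx Hx1 Hx2)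
    as Hprop.
  pose proof (T_inf_interior_toll_pos Hl1 Hl2 Ht Wx Hx1 Hx2) as Ht1.
  rewrite (untolled_flow_ge_iff Hl1 Hl2 Wx Wz Hx1 Hx2).
  destruct Wx as [[_ [_ Hsum]] _].
  split; intros; nra.
Qed.
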